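(* In a large society, the welfare maximizing equilibrium is not collaborative; that is, there is no welfare maximizing equilibrium with $C(\mathbf{g}^W)=\{i,j\}$ and $g^W_{ij}=g^W_{ji}=1$.
   Context: Model: $N=\{1,\dots,n\}$, $n\ge 3$, is the set of players. Each player $i$ chooses contributions $x_i\ge 0$, $y_i\ge 0$ to two public goods and links $g_{ij}\in\{0,1\}$ for $j\neq i$ (the directed network $\mathbf{g}$; $g_{ij}=1$ means $i$ sponsors a link to $j$). Let $N_i(\mathbf{g})=\{j: g_{ij}=1\}$, $\eta_i(\mathbf{g})=|N_i(\mathbf{g})|$, $\bar{x}_i(\mathbf{g})=\sum_{j\in N_i(\mathbf{g})}x_j$, $\bar{y}_i(\mathbf{g})=\sum_{j\in N_i(\mathbf{g})}y_j$. Player $i$'s payoff is $U_i(\mathbf{s})=t_i f(x_i+\bar{x}_i(\mathbf{g}))+(1-t_i)f(y_i+\bar{y}_i(\mathbf{g}))-c(x_i+y_i)-\eta_i(\mathbf{g})k$, where $t_i\in[0,1]$ is $i$'s type, $c>0$, $k>0$, and $f$ is twice continuously differentiable, strictly increasing and strictly concave with $\lim_{z\to0}f'(z)>c$ and $\lim_{z\to\infty}f'(z)<c$. Types are drawn from a continuous distribution on $[0,1]$, so they are distinct; players are indexed so that $t_i>t_j$ whenever $i>j$, and types $0$ and $1$ are realized. A Nash equilibrium is a profile $\mathbf{s}^*=(\mathbf{x}^*,\mathbf{y}^*,\mathbf{g}^* )$ from which no player can profitably deviate in her own contributions and links jointly. $C(\mathbf{g})=\{i: g_{ji}=1\text{ for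 some }j\}$ is the set of large contributors. Welfare is $\sum_{i\in N}U_i(\mathbf{s})$; the welfare maximizing equilibrium $\mathbf{s}^W$ (network $\mathbf{g}^W$) is a Nash equilibrium with welfare at least that of every Nash equilibrium. A large society is the limit $n\to\infty$ with types dense in $[0,1]$. *)

From Stdlib Require Import Reals Lra Lia Arith.
From Coquelicot Require Import Coquelicot.
Open Scope R_scope.

Fixpoint sumto (n : nat) (F : nat -> R) : R :=
  match n with
  | O => 0
  | S m => sumto m F + F m
  end.

(* Players are 0, ..., n-1.  A strategy profile is given by contributions
   x, y : nat -> R and links g : nat -> nat -> bool (g i j = true means that
   i sponsors a link to j); only entries with indices < n and j <> i matter. *)

Definition link (n : nat) (g : nat -> nat -> bool) (i j : nat) : bool :=
  (Nat.ltb j n && negb (Nat.eqb j i) && g i j)%bool.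

Definition nbsum (n : nat) (g : nat -> nat -> bool) (x : nat -> R) (i : nat) : R :=
  sumto n (fun j => if link n g i j then x j else 0).

Definition eta (n : nat) (g : nat -> nat -> bool) (i : nat) : R :=
  sumto n (fun j => if link n g i j then 1 else 0).

Definition payoff (n : nat) (f : R -> R) (c k : R) (t : nat -> R)
  (x y : nat -> R) (g : nat -> nat -> bool) (i : nat) : R :=
  t i * f (x i + nbsum n g x i) + (1 - t i) * f (y i + nbsum n g y i)
  - c * (x i + y i) - eta n g i * k.

Definition welfare (n : nat) (f : R -> R) (c k : R) (t : nat -> R)
  (x y : nat -> R) (g : nat -> nat -> bool) : R :=
  sumto n (fun i => payoff n f c k t x y g i).

Definition admissible (n : nat) (x y : nat -> R) : Prop :=
  forall i, (i < n)%nat -> 0 <= x i /\ 0 <= y i.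

Definition upd_R (x : nat -> R) (i : nat) (v : R) : nat -> R :=
  fun j => if Nat.eqb j i then v else x j.
Definition upd_g (g : nat -> nat -> bool) (i : nat) (gi : nat -> bool)
  : nat -> nat -> bool :=
  fun a b => if Nat.eqb a i then gi b else g a b.

Definition nash (n : nat) (f : R -> R) (c k : R) (t : nat -> R)
  (x y : nat -> R) (g : nat -> nat -> bool) : Prop :=
  admissible n x y /\
  forall i, (i < n)%nat ->
  forall (xi yi : R) (gi : nat -> bool), 0 <= xi -> 0 <= yi ->
    payoff n f c k t (upd_R x i xi) (upd_R y i yi) (upd_g g i gi) i
      <= payoff n f c k t x y g i.

Definition welfare_max_eq (n : nat) (f : R -> R) (c k : R) (t : nat -> R)
  (x y : nat -> R) (g : nat -> nat -> bool) : Prop :=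
  nash n f c k t x y g /\
  forall x' y' g', nash n f c k t x' y' g' ->
    welfare n f c k t x' y' g' <= welfare n f c k t x y g.

Definition large_contributor (n : nat) (g : nat -> nat -> bool) (m : nat) : Prop :=
  (m < n)%nat /\ exists j, (j < n)%nat /\ link n g j m = true.

Definition collaborative (n : nat) (g : nat -> nat -> bool) : Prop :=
  exists i j, (i < n)%nat /\ (j < n)%nat /\ i <> j /\
    link n g i j = true /\ link n g j i = true /\
    forall m, (m < n)%nat -> (large_contributor n g m <-> (m = i \/ m = j)).

Definition f_assumptions (f : R -> R) (c : R) : Prop :=
  (forall z, 0 < z ->
     ex_derive f z /\ ex_derive (Derive f) z /\
     continuous (Derive (Derive f)) z) /\
  filterlim f (at_right 0) (locally (f 0)) /\
  (forall a b, 0 <= a -> a < b -> f a < f b) /\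
  (forall a b l, 0 <= a -> 0 <= b -> a <> b -> 0 < l < 1 ->
     l * f a + (1 - l) * f b < f (l * a + (1 - l) * b)) /\
  (exists L : Rbar, filterlim (Derive f) (at_right 0) (Rbar_locally L)
                    /\ Rbar_lt (Finite c) L) /\
  (exists L : Rbar, filterlim (Derive f) (Rbar_locally p_infty) (Rbar_locally L)
                    /\ Rbar_lt L (Finite c)).

Definition type_profile (n : nat) (t : nat -> R) : Prop :=
  (forall i j, (j < i)%nat -> (i < n)%nat -> t j < t i) /\
  t 0%nat = 0 /\ t (n - 1)%nat = 1.

Definition delta_dense (n : nat) (t : nat -> R) (delta : R) : Prop :=
  forall z, 0 <= z <= 1 -> exists i, (i < n)%nat /\ Rabs (t i - z) < delta.

(* Let ms maximise f z - c z, the provision of a type-1 player on her own.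
   In a collaborative equilibrium one large contributor i provides the first
   good, the other, j, the second, and everybody else links to them.  Since i
   also pays for a link to j, her type is bounded away from 1, so her
   provision falls short of ms by a margin h independent of the society;
   moreover t_j < t_i.  Replace the network by two stars: the type-1 player
   provides ms of the first good, the type-0 player ms of the second, and every
   other player either links to the relevant hub or keeps her contribution.
   As t_j < t_i, every player finds a link to at least one hub worthwhile,
   which makes the stars an equilibrium.  The hubs lose at most c ms each,
   nobody else loses, and every player with type in [b, 1) gains c h / 2;
   when types are dense there are more than 4 ms / h such players, so the
   star equilibrium has strictly higher welfare. *)

From Stdlib Require Import Reals Lra Lia ZArith.
From Coquelicot Require Import Coquelicot.
Open Scope R_scope.

(** * Concavity and derivatives *)

Definition strict_concave_nonneg (f : R -> R) : Prop :=
  forall a b l, 0 <= a -> 0 <= b -> a <> b -> 0 < l < 1 ->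
    l * f a + (1 - l) * f b < f (l * a + (1 - l) * b).

Lemma chord_slopes_decrease f u v w : strict_concave_nonneg f ->
  0 <= u -> u < v -> v < w -> (f w - f v) * (v - u) <= (f v - f u) * (w - v).
Proof.
  intros Hc Hu Huv Hvw.
  set (l := (w - v) / (w - u)).
  assert (Hl : 0 < l < 1).
  { unfold l; split; [apply Rdiv_lt_0_compat; lra|].
    apply (Rmult_lt_reg_r (w - u)); [lra|].
    unfold Rdiv; rewrite Rmult_assoc, Rinv_l; lra. }
  assert (Hv : l * u + (1 - l) * w = v) by (unfold l; field; lra).
  assert (Hlw : l * (w - u) = w - v) by (unfold l; field; lra).
  pose proof (Hc u w l Hu ltac:(lra) ltac:(lra) Hl) as H. rewrite Hv in H.
  assert ((l * f u + (1 - l) * f w) * (w - u) <= f v * (w - u))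
    by (apply Rmult_le_compat_r; lra).
  nra.
Qed.

Lemma derivable_pt_lim_linear_error f z d : derivable_pt_lim f z d ->
  forall eps, 0 < eps -> exists del, 0 < del /\ forall e, e <> 0 -> Rabs e < del ->
    Rabs (f (z + e) - f z - d * e) <= eps * Rabs e.
Proof.
  intros Hd eps Heps. destruct (Hd eps Heps) as [del Hdel].
  exists del. split; [apply cond_pos|]. intros e He0 He.
  replace (f (z + e) - f z - d * e) with (((f (z + e) - f z) / e - d) * e) by (field; lra).
  rewrite Rabs_mult. apply Rmult_le_compat_r; [apply Rabs_pos|].
  left. apply Hdel; assumption.
Qed.

Lemma derive_le_of_right_slopes f z d B eta : derivable_pt_lim f z d -> 0 < eta ->
  (forall e, 0 < e < eta -> f (z + e) - f z <= B * e) -> d <= B.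
Proof.
  intros Hd Heta H. apply Rnot_lt_le. intros HBd.
  destruct (derivable_pt_lim_linear_error f z d Hd ((d - B) / 2) ltac:(lra)) as [del [Hdel Herr]].
  set (e := Rmin del eta / 2).
  assert (He : 0 < e < del /\ e < eta) by (unfold e; split; [split|]; apply Rmin_case_strong; lra).
  specialize (Herr e ltac:(lra) ltac:(rewrite Rabs_pos_eq; lra)).
  rewrite (Rabs_pos_eq e) in Herr by lra. apply Rabs_le_between in Herr.
  specialize (H e ltac:(lra)). nra.
Qed.

Lemma derive_ge_of_left_slopes f z d B eta : derivable_pt_lim f z d -> 0 < eta ->
  (forall e, 0 < e < eta -> B * e <= f z - f (z - e)) -> B <= d.
Proof.
  intros Hd Heta H. apply Rnot_lt_le. intros HdB.
  destruct (derivable_pt_lim_linear_error f z d Hd ((B - d) / 2) ltac:(lra)) as [del [Hdel Herr]].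
  set (e := Rmin del eta / 2).
  assert (He : 0 < e < del /\ e < eta) by (unfold e; split; [split|]; apply Rmin_case_strong; lra).
  specialize (Herr (- e) ltac:(lra) ltac:(rewrite Rabs_Ropp, Rabs_pos_eq; lra)).
  rewrite Rabs_Ropp, (Rabs_pos_eq e) in Herr by lra. apply Rabs_le_between in Herr.
  replace (z + - e) with (z - e) in Herr by ring.
  specialize (H e ltac:(lra)). nra.
Qed.

Lemma concave_below_tangent f z d w : strict_concave_nonneg f ->
  derivable_pt_lim f z d -> 0 < z -> 0 <= w -> f w <= f z + d * (w - z).
Proof.
  intros Hc Hd Hz Hw.
  destruct (Rtotal_order w z) as [Hlt | [-> | Hgt]]; [| lra |].
  - set (s := (f z - f w) / (z - w)).
    assert (Es : s * (z - w) = f z - f w) by (unfold s; field; lra).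
    enough (d <= s) by nra.
    apply (derive_le_of_right_slopes f z d s 1 Hd); [lra|].
    intros e He.
    pose proof (chord_slopes_decrease f w z (z + e) Hc Hw Hlt ltac:(lra)). nra.
  - set (s := (f w - f z) / (w - z)).
    assert (Es : s * (w - z) = f w - f z) by (unfold s; field; lra).
    enough (s <= d) by nra.
    apply (derive_ge_of_left_slopes f z d s z Hd Hz).
    intros e He.
    pose proof (chord_slopes_decrease f (z - e) z w Hc ltac:(lra) ltac:(lra) Hgt). nra.
Qed.

Lemma Derive_gt_near_0 (f : R -> R) c : f_assumptions f c ->
  exists z, 0 < z /\ c < Derive f z.
Proof.
  intros (_ & _ & _ & _ & [L [HL HcL]] & _).
  destruct (HL _ (open_Rbar_gt' L c HcL)) as [eps Heps].
  exists (eps / 2). pose proof (cond_pos eps).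
  split; [lra|]. apply Heps; [|lra].
  change (Rabs (eps / 2 - 0) < eps). rewrite Rminus_0_r, Rabs_pos_eq; lra.
Qed.

Lemma Derive_lt_near_infty (f : R -> R) c : f_assumptions f c ->
  exists z, 0 < z /\ Derive f z < c.
Proof.
  intros (_ & _ & _ & _ & _ & [L [HL HLc]]).
  destruct (HL _ (open_Rbar_lt' L c HLc)) as [M HM].
  exists (Rmax M 0 + 1). pose proof (Rmax_l M 0). pose proof (Rmax_r M 0).
  split; [lra|]. apply HM. lra.
Qed.

(** * The net benefit f z - c z *)

Definition is_net_max (f : R -> R) (c ms : R) : Prop :=
  0 < ms /\ forall w, 0 <= w -> f w - c * w <= f ms - c * ms.

Section NetBenefit.

Variables (f : R -> R) (c : R).
Hypotheses (Hf : f_assumptions f c) (Hc : 0 < c).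

Lemma f_strict_concave : strict_concave_nonneg f.
Proof. unfold strict_concave_nonneg. apply Hf. Qed.

Lemma f_derivable z : 0 < z -> derivable_pt_lim f z (Derive f z).
Proof.
  intros Hz. apply is_derive_Reals, Derive_correct, (proj1 (proj1 Hf z Hz)).
Qed.

Lemma f_lt a b : 0 <= a -> a < b -> f a < f b.
Proof. apply Hf. Qed.

Lemma f_le a b : 0 <= a -> a <= b -> f a <= f b.
Proof.
  intros Ha Hab. destruct (Req_dec a b) as [->|]; [lra|].
  left. apply f_lt; lra.
Qed.

Lemma net_continuous z : 0 < z -> continuity_pt (fun w => f w - c * w) z.
Proof.
  intros Hz. apply continuity_pt_minus.
  - apply continuity_pt_filterlim,
      (ex_derive_continuous (K := R_AbsRing) (V := R_NormedModule) f z),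
      (proj1 (proj1 Hf z Hz)).
  - apply continuity_pt_mult; [apply continuity_pt_const; intros ? ?; reflexivity|].
    apply derivable_continuous_pt, derivable_pt_id.
Qed.

(* Tangents at a point where f' > c (resp. f' < c) show that f w - c w
   increases to the left of it (resp. decreases to the right of it), so the
   maximum is attained on a compact interval. *)
Lemma exists_net_max : exists ms, is_net_max f c ms.
Proof.
  destruct (Derive_gt_near_0 f c Hf) as [z1 [Hz1 Hd1]].
  destruct (Derive_lt_near_infty f c Hf) as [z0 [Hz0 Hd0]].
  assert (Left : forall w, 0 <= w <= z1 -> f w - c * w <= f z1 - c * z1).
  { intros w Hw.
    pose proof (concave_below_tangent f z1 _ w f_strict_concave (f_derivable z1 Hz1) Hz1 (proj1 Hw)).
    nra. }
  assert (Right : forall w, z0 <= w -> f w - c * w <= f z0 - c * z0).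
  { intros w Hw.
    pose proof (concave_below_tangent f z0 _ w f_strict_concave (f_derivable z0 Hz0) Hz0 ltac:(lra)).
    nra. }
  destruct (Rle_dec z0 z1).
  - exists z0. split; [lra|]. intros w Hw. destruct (Rle_dec z0 w); [auto|].
    specialize (Left w ltac:(lra)). specialize (Right z1 ltac:(lra)). lra.
  - destruct (continuity_ab_maj (fun w => f w - c * w) z1 z0 ltac:(lra)) as [M [HM HMin]].
    { intros w Hw. apply net_continuous. lra. }
    exists M. split; [lra|]. intros w Hw.
    destruct (Rle_dec w z1).
    { specialize (Left w ltac:(lra)). specialize (HM z1 ltac:(lra)). simpl in HM. lra. }
    destruct (Rle_dec z0 w).
    { specialize (Right w ltac:(lra)). specialize (HM z0 ltac:(lra)). simpl in HM. lra. }
    apply (HM w). lra.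
Qed.

Lemma weight_le_of_marginal_bounds z th1 th2 eta : 0 < z -> 0 <= th1 -> 0 < eta ->
  (forall e, 0 < e < eta -> c * e <= th1 * (f z - f (z - e))) ->
  (forall e, 0 < e < 1 -> th2 * (f (z + e) - f z) <= c * e) -> th2 <= th1.
Proof.
  intros Hz Hth1 Heta HL HR.
  pose proof (f_derivable z Hz) as Hd.
  assert (c <= th1 * Derive f z).
  { apply (derive_ge_of_left_slopes (mult_real_fct th1 f) z _ c eta
             (derivable_pt_lim_scal _ _ _ _ Hd) Heta).
    intros e He. unfold mult_real_fct. specialize (HL e He). lra. }
  assert (th2 * Derive f z <= c).
  { apply (derive_le_of_right_slopes (mult_real_fct th2 f) z _ c 1
             (derivable_pt_lim_scal _ _ _ _ Hd) ltac:(lra)).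
    intros e He. unfold mult_real_fct. specialize (HR e He). lra. }
  assert (0 < Derive f z) by nra.
  nra.
Qed.

(* Two contributors to one good who both best-respond to each other face the
   same marginal benefit at the total [u1 + u2]. *)
Lemma weight_le_of_joint_optimum th1 th2 u1 u2 : 0 <= th1 -> 0 < u1 -> 0 < u2 ->
  (forall v, 0 <= v -> th1 * f (v + u2) - c * v <= th1 * f (u1 + u2) - c * u1) ->
  (forall v, 0 <= v -> th2 * f (v + u1) - c * v <= th2 * f (u2 + u1) - c * u2) ->
  th2 <= th1.
Proof.
  intros Hth1 Hu1 Hu2 O1 O2.
  apply (weight_le_of_marginal_bounds (u1 + u2) th1 th2 u1 ltac:(lra) Hth1 Hu1).
  - intros e He. pose proof (O1 (u1 - e) ltac:(lra)) as D.
    replace (u1 - e + u2) with (u1 + u2 - e) in D by ring. lra.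
  - intros e He. pose proof (O2 (u2 + e) ltac:(lra)) as D.
    replace (u2 + e + u1) with (u1 + u2 + e) in D by ring.
    replace (u2 + u1) with (u1 + u2) in D by ring. lra.
Qed.

Variable ms : R.
Hypothesis Hms : is_net_max f c ms.

Lemma optimum_le_net_max th z L : 0 <= th < 1 -> 0 <= L <= z -> L <= ms ->
  (forall v, L <= v -> th * f v - c * v <= th * f z - c * z) -> z <= ms.
Proof.
  intros Hth HL HLms Hopt. destruct Hms as [_ Hmax].
  apply Rnot_lt_le. intros Hz.
  pose proof (f_lt ms z ltac:(lra) Hz).
  specialize (Hopt ms HLms). specialize (Hmax z ltac:(lra)). nra.
Qed.

(* Since f'(ms) <= c, a weight th <= a < 1 makes th f - c w strictly
   decreasing on a left neighbourhood of ms of length 2h that does not depend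
   on th; an optimum X > ms - h would contradict the chord inequality. *)
Lemma optimum_gap a : 0 < a < 1 ->
  exists h, 0 < h /\ forall th X, 0 < th <= a -> 0 < X ->
    (forall w, 0 <= w < X -> c * (X - w) <= th * (f X - f w)) -> X <= ms - h.
Proof.
  intros Ha. destruct Hms as [Hms0 Hmax].
  pose proof (f_derivable ms Hms0) as Hd. set (d := Derive f ms) in *.
  assert (Hdc : d <= c).
  { apply (derive_le_of_right_slopes f ms d c 1 Hd); [lra|]. intros e He.
    specialize (Hmax (ms + e) ltac:(lra)). lra. }
  set (eps := c * (1 - a) / 6).
  assert (Heps : 0 < eps) by (unfold eps; apply Rdiv_lt_0_compat; nra).
  destruct (derivable_pt_lim_linear_error f ms d Hd eps Heps) as [del [Hdel Herr]].
  set (h := Rmin (del / 3) (ms / 2)).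
  assert (Hh : 0 < h /\ h <= del / 3 /\ h <= ms / 2).
  { unfold h; split; [apply Rmin_case_strong; lra|]. split; [apply Rmin_l|apply Rmin_r]. }
  exists h. split; [lra|]. intros th X Hth HX Hopt.
  apply Rnot_lt_le. intros HXh.
  set (v := ms - h). set (u := ms - 2 * h).
  assert (Hfvu : f v - f u <= (d + 3 * eps) * h).
  { pose proof (Herr (- h) ltac:(lra) ltac:(rewrite Rabs_Ropp, Rabs_pos_eq; lra)) as E1.
    pose proof (Herr (- (2 * h)) ltac:(lra) ltac:(rewrite Rabs_Ropp, Rabs_pos_eq; lra)) as E2.
    rewrite Rabs_Ropp, (Rabs_pos_eq h) in E1 by lra.
    rewrite Rabs_Ropp, (Rabs_pos_eq (2 * h)) in E2 by lra.
    apply Rabs_le_between in E1. apply Rabs_le_between in E2.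
    unfold u, v. replace (ms - h) with (ms + - h) by ring.
    replace (ms - 2 * h) with (ms + - (2 * h)) by ring. nra. }
  assert (Hmon : f u <= f v) by (apply f_le; unfold u, v; lra).
  pose proof (chord_slopes_decrease f u v X f_strict_concave
                ltac:(unfold u; lra) ltac:(unfold u, v; lra) ltac:(unfold v; lra)) as Hch.
  replace (v - u) with h in Hch by (unfold u, v; ring).
  pose proof (Hopt v ltac:(unfold v; lra)) as Hv.
  assert (Hch' : c * h <= th * (f v - f u)).
  { apply (Rmult_le_reg_r (X - v)); [unfold v; lra|]. nra. }
  assert (a * (d + 3 * eps) < c).
  { assert (a * d <= a * c) by (apply Rmult_le_compat_l; lra).
    assert (0 < c * ((1 - a) * (2 - a))) by (apply Rmult_lt_0_compat; nra).
    unfold eps. nra. }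
  nra.
Qed.

End NetBenefit.

(** * Finite sums and rows of links *)

Lemma sumto_ext n F G : (forall q, (q < n)%nat -> F q = G q) -> sumto n F = sumto n G.
Proof.
  induction n as [|n IH]; intros H; simpl; [reflexivity|].
  rewrite IH by (intros; apply H; lia). rewrite H by lia. reflexivity.
Qed.

Lemma sumto_le n F G : (forall q, (q < n)%nat -> F q <= G q) -> sumto n F <= sumto n G.
Proof.
  induction n as [|n IH]; intros H; simpl; [lra|].
  pose proof (IH ltac:(intros; apply H; lia)). pose proof (H n ltac:(lia)). lra.
Qed.

Lemma sumto_plus n F G : sumto n (fun q => F q + G q) = sumto n F + sumto n G.
Proof. induction n as [|n IH]; simpl; [ring|]. rewrite IH; ring. Qed.

Lemma sumto_scal n a F : sumto n (fun q => a * F q) = a * sumto n F.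
Proof. induction n as [|n IH]; simpl; [ring|]. rewrite IH; ring. Qed.

Lemma sumto_minus n F G : sumto n (fun q => F q - G q) = sumto n F - sumto n G.
Proof. induction n as [|n IH]; simpl; [ring|]. rewrite IH; ring. Qed.

Lemma sumto_zero n F : (forall q, (q < n)%nat -> F q = 0) -> sumto n F = 0.
Proof.
  intros H. transitivity (sumto n (fun _ => 0 * 0)).
  - apply sumto_ext. intros q Hq. rewrite H by exact Hq. ring.
  - rewrite sumto_scal. ring.
Qed.

Lemma sumto_nonneg n F : (forall q, (q < n)%nat -> 0 <= F q) -> 0 <= sumto n F.
Proof.
  intros H. rewrite <- (sumto_zero n (fun _ => 0)) by reflexivity. apply sumto_le, H.
Qed.

Lemma sumto_le_prefix n1 n2 F : (forall q, (q < n2)%nat -> 0 <= F q) ->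
  (n1 <= n2)%nat -> sumto n1 F <= sumto n2 F.
Proof.
  intros HF Hle. induction Hle as [|n2 Hle IH]; [lra|]. simpl.
  pose proof (HF n2 ltac:(lia)). pose proof (IH ltac:(intros; apply HF; lia)). lra.
Qed.

Lemma sumto_single n F i : (i < n)%nat ->
  (forall q, (q < n)%nat -> q <> i -> F q = 0) -> sumto n F = F i.
Proof.
  induction n as [|n IH]; simpl; intros Hi H; [lia|].
  destruct (Nat.eq_dec i n) as [->|Hin].
  - rewrite sumto_zero by (intros; apply H; lia). ring.
  - rewrite IH, (H n); [ring | lia .. |]. intros; apply H; lia.
Qed.

Lemma sumto_pair n F i j : (i < n)%nat -> (j < n)%nat -> i <> j ->
  (forall q, (q < n)%nat -> q <> i -> q <> j -> F q = 0) -> sumto n F = F i + F j.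
Proof.
  induction n as [|n IH]; simpl; intros Hi Hj Hij H; [lia|].
  destruct (Nat.eq_dec i n) as [->|Hin]; [|destruct (Nat.eq_dec j n) as [->|Hjn]].
  - rewrite (sumto_single n F j); [ring | lia |]. intros; apply H; lia.
  - rewrite (sumto_single n F i); [ring | lia |]. intros; apply H; lia.
  - rewrite IH, (H n); [ring | lia .. |]. intros; apply H; lia.
Qed.

Lemma sumto_le_pair n F i j : (i < n)%nat -> (j < n)%nat -> i <> j ->
  (forall q, (q < n)%nat -> q <> i -> q <> j -> F q <= 0) -> sumto n F <= F i + F j.
Proof.
  intros Hi Hj Hij H.
  set (G q := if Nat.eq_dec q i then F q else if Nat.eq_dec q j then F q else 0).
  apply Rle_trans with (sumto n G).
  - apply sumto_le. intros q Hq. unfold G.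
    destruct (Nat.eq_dec q i); [lra|]. destruct (Nat.eq_dec q j); [lra|]. auto.
  - rewrite (sumto_pair n G i j Hi Hj Hij).
    + unfold G. destruct (Nat.eq_dec i i), (Nat.eq_dec j i), (Nat.eq_dec j j); lia || lra.
    + intros q Hq Hqi Hqj. unfold G.
      destruct (Nat.eq_dec q i), (Nat.eq_dec q j); lia || reflexivity.
Qed.

Definition indic (b : bool) : R := if b then 1 else 0.

(* [row_link n (g m) m] is [link n g m]; taking the row [g m] as argument lets a
   deviation, which replaces the deviator's row, be stated directly. *)
Definition row_link (n : nat) (r : nat -> bool) (m q : nat) : bool :=
  (Nat.ltb q n && negb (Nat.eqb q m) && r q)%bool.
Definition row_sum (n : nat) (r : nat -> bool) (m : nat) (x : nat -> R) : R :=
  sumto n (fun q => if row_link n r m q then x q else 0).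
Definition row_count (n : nat) (r : nat -> bool) (m : nat) : R :=
  sumto n (fun q => indic (row_link n r m q)).

Lemma row_link_self n r m : row_link n r m m = false.
Proof. unfold row_link. rewrite Nat.eqb_refl, Bool.andb_false_r. reflexivity. Qed.

Lemma row_link_true n r m q : row_link n r m q = true -> (q < n)%nat /\ q <> m /\ r q = true.
Proof.
  unfold row_link. intros H.
  apply andb_prop in H as [H Hr]. apply andb_prop in H as [Hq Hm].
  apply Nat.ltb_lt in Hq. apply Bool.negb_true_iff, Nat.eqb_neq in Hm. auto.
Qed.

Lemma row_link_andb n r s m q :
  row_link n (fun q => r q && s q)%bool m q = (row_link n r m q && s q)%bool.
Proof. unfold row_link. destruct (Nat.ltb q n), (Nat.eqb q m), (r q), (s q); reflexivity. Qed.

Lemma row_sum_nonneg n r m x : (forall q, (q < n)%nat -> 0 <= x q) -> 0 <= row_sum n r m x.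
Proof.
  intros Hx. apply sumto_nonneg. intros q Hq. destruct (row_link n r m q); [auto|lra].
Qed.

Lemma row_sum_split n r m (u : nat -> R) a : (a < n)%nat ->
  row_sum n r m u = indic (row_link n r m a) * u a
                    + row_sum n r m (fun q => if Nat.eqb q a then 0 else u q).
Proof.
  intros Ha. unfold row_sum.
  set (U q := if row_link n r m q then (if Nat.eqb q a then u a else 0) else 0).
  assert (HU : sumto n U = indic (row_link n r m a) * u a).
  { rewrite (sumto_single n U a Ha).
    - unfold U. rewrite Nat.eqb_refl. unfold indic. destruct (row_link n r m a); ring.
    - intros q _ Hqa. unfold U. apply Nat.eqb_neq in Hqa. rewrite Hqa.
      destruct (row_link n r m q); reflexivity. }
  rewrite <- HU, <- sumto_plus. apply sumto_ext. intros q _. unfold U.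
  destruct (row_link n r m q); [|ring].
  destruct (Nat.eqb q a) eqn:E; [apply Nat.eqb_eq in E; subst|]; ring.
Qed.

Section RowPair.

Variables (n : nat) (r : nat -> bool) (m a b : nat).
Hypotheses (Ha : (a < n)%nat) (Hb : (b < n)%nat) (Hab : a <> b)
  (Hrow : forall q, row_link n r m q = true -> q = a \/ q = b).

Lemma row_sum_pair x : row_sum n r m x =
  (if row_link n r m a then x a else 0) + (if row_link n r m b then x b else 0).
Proof.
  apply (sumto_pair n (fun q => if row_link n r m q then x q else 0)); auto.
  intros q Hq Hqa Hqb. destruct (row_link n r m q) eqn:E; [|reflexivity].
  destruct (Hrow q E); lia.
Qed.

Lemma row_count_pair : row_count n r m = indic (row_link n r m a) + indic (row_link n r m b).
Proof.
  apply (sumto_pair n (fun q => indic (row_link n r m q))); auto.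
  intros q Hq Hqa Hqb. destruct (row_link n r m q) eqn:E; [|reflexivity].
  destruct (Hrow q E); lia.
Qed.

End RowPair.

Lemma payoff_row n f c k t x y g m :
  payoff n f c k t x y g m =
  t m * f (x m + row_sum n (g m) m x) + (1 - t m) * f (y m + row_sum n (g m) m y)
  - c * (x m + y m) - row_count n (g m) m * k.
Proof. reflexivity. Qed.

Lemma payoff_deviation n f c k t x y g m v w r :
  payoff n f c k t (upd_R x m v) (upd_R y m w) (upd_g g m r) m =
  t m * f (v + row_sum n r m x) + (1 - t m) * f (w + row_sum n r m y)
  - c * (v + w) - row_count n r m * k.
Proof.
  assert (Hlink : forall q, link n (upd_g g m r) m q = row_link n r m q).
  { intros q. unfold link, row_link, upd_g. rewrite Nat.eqb_refl. reflexivity. }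
  assert (Hsum : forall u : nat -> R, forall z,
             nbsum n (upd_g g m r) (upd_R u m z) m = row_sum n r m u).
  { intros u z. apply sumto_ext. intros q Hq. rewrite Hlink.
    unfold upd_R. destruct (Nat.eqb q m) eqn:E; [|reflexivity].
    apply Nat.eqb_eq in E. subst. rewrite row_link_self. reflexivity. }
  unfold payoff. rewrite !Hsum. unfold upd_R at 1 2 3 4. rewrite !Nat.eqb_refl.
  unfold eta, row_count. rewrite (sumto_ext _ _ (fun q => indic (row_link n r m q)));
    [reflexivity|]. intros q _. rewrite Hlink. reflexivity.
Qed.

Lemma payoff_swap_goods n f c k t x y g m :
  payoff n f c k (fun q => 1 - t q) y x g m = payoff n f c k t x y g m.
Proof. unfold payoff. ring. Qed.

Lemma nash_swap_goods n f c k t x y g :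
  nash n f c k t x y g -> nash n f c k (fun q => 1 - t q) y x g.
Proof.
  intros [Hadm Hdev]. split.
  - intros m Hm. destruct (Hadm m Hm). auto.
  - intros m Hm v w r Hv Hw. rewrite !payoff_swap_goods. apply Hdev; assumption.
Qed.

(** * Best responses to a hub *)

Definition link_worthwhile (f : R -> R) (c k th A : R) : Prop :=
  forall w, 0 <= w -> th * f w - c * w <= th * f A - k.

(* A player of weight [th] who currently contributes [u] and faces a hub
   providing [ms] either keeps [u] or switches to contributing nothing and
   linking to the hub, whichever is better. *)
Definition prefers_hub (f : R -> R) (c k ms th u : R) : bool :=
  if Rle_dec (th * f u - c * u) (th * f ms - k) then true else false.
Definition response_contrib (f : R -> R) (c k ms th u : R) : R :=
  if prefers_hub f c k ms th u then 0 else u.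
Definition response_value (f : R -> R) (c k ms th u : R) : R :=
  Rmax (th * f ms - k) (th * f u - c * u).

Lemma response_value_ge_hub f c k ms th u v : f_assumptions f c -> is_net_max f c ms ->
  0 <= th <= 1 -> 0 <= v -> th * f (v + ms) - c * v - k <= response_value f c k ms th u.
Proof.
  intros Hf [Hms0 Hmax] Hth Hv. unfold response_value.
  specialize (Hmax (v + ms) ltac:(lra)).
  assert (f ms <= f (v + ms)) by (apply (f_le f c Hf); lra).
  pose proof (Rmax_l (th * f ms - k) (th * f u - c * u)). nra.
Qed.

Lemma response_contrib_nonneg f c k ms th u : 0 <= u -> 0 <= response_contrib f c k ms th u.
Proof. intros Hu. unfold response_contrib. destruct (prefers_hub _ _ _ _ _ _); lra. Qed.

Lemma response_value_of_prefers f c k ms th u : prefers_hub f c k ms th u = true ->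
  response_value f c k ms th u = th * f ms - k.
Proof.
  unfold prefers_hub, response_value. destruct (Rle_dec _ _); [|discriminate].
  intros _. apply Rmax_left. lra.
Qed.

Lemma response_value_of_not_prefers f c k ms th u : prefers_hub f c k ms th u = false ->
  response_value f c k ms th u = th * f u - c * u.
Proof.
  unfold prefers_hub, response_value. destruct (Rle_dec _ _); [discriminate|].
  intros _. apply Rmax_right. lra.
Qed.

Section PlayerResponse.

Variables (f : R -> R) (c k ms th u A : R) (L : bool).
Hypotheses (Hf : f_assumptions f c) (Hc : 0 < c) (Hk : 0 < k) (Hms : is_net_max f c ms)
  (Hth : 0 <= th < 1) (Hu : 0 <= u) (HA : 0 <= A <= ms)
  (Hopt : forall v, 0 <= v ->
     th * f (v + indic L * A) - c * v <= th * f (u + indic L * A) - c * u)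
  (Hlink : L = true -> forall v, 0 <= v ->
     th * f v - c * v <= th * f (u + A) - c * u - k).

Lemma linked_total_le_net_max : L = true -> u + A <= ms.
Proof.
  intros ->. apply (optimum_le_net_max f c Hf ms Hms th (u + A) A Hth); [lra|lra|].
  intros v Hv. specialize (Hopt (v - A) ltac:(lra)). unfold indic in Hopt.
  replace (v - A + 1 * A) with v in Hopt by ring.
  replace (u + 1 * A) with (u + A) in Hopt by ring. lra.
Qed.

Lemma unlinked_optimal : L = false -> forall v, 0 <= v -> th * f v - c * v <= th * f u - c * u.
Proof.
  intros -> v Hv. specialize (Hopt v Hv). unfold indic in Hopt.
  rewrite !Rmult_0_l, !Rplus_0_r in Hopt. exact Hopt.
Qed.

Lemma unlinked_contrib_le_net_max : L = false -> u <= ms.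
Proof.
  intros HL. apply (optimum_le_net_max f c Hf ms Hms th u 0 Hth); [lra|left; apply Hms|].
  intros v Hv. apply unlinked_optimal; assumption.
Qed.

Lemma linked_value_le_hub : L = true -> th * f (u + A) - c * u - k <= th * f ms - k.
Proof.
  intros HL. pose proof (linked_total_le_net_max HL).
  assert (f (u + A) <= f ms) by (apply (f_le f c Hf); lra).
  assert (th * f (u + A) <= th * f ms) by (apply Rmult_le_compat_l; lra). nra.
Qed.

Lemma prefers_hub_of_linked : L = true -> prefers_hub f c k ms th u = true.
Proof.
  intros HL. unfold prefers_hub. destruct (Rle_dec _ _) as [|Hn]; [reflexivity|].
  exfalso. apply Hn. pose proof (Hlink HL u Hu). pose proof (linked_value_le_hub HL). lra.
Qed.

Lemma response_value_ge_autarky v : 0 <= v -> th * f v - c * v <= response_value f c k ms th u.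
Proof.
  intros Hv. unfold response_value.
  destruct (Bool.bool_dec L true) as [HL|HL%Bool.not_true_is_false].
  - pose proof (Hlink HL v Hv). pose proof (linked_value_le_hub HL).
    pose proof (Rmax_l (th * f ms - k) (th * f u - c * u)). lra.
  - pose proof (unlinked_optimal HL v Hv).
    pose proof (Rmax_r (th * f ms - k) (th * f u - c * u)). lra.
Qed.

Lemma current_le_response_value :
  th * f (u + indic L * A) - c * u - indic L * k <= response_value f c k ms th u.
Proof.
  unfold response_value.
  destruct (Bool.bool_dec L true) as [HL|HL%Bool.not_true_is_false]; rewrite HL; unfold indic.
  - replace (u + 1 * A) with (u + A) by ring. pose proof (linked_value_le_hub HL).
    pose proof (Rmax_l (th * f ms - k) (th * f u - c * u)). lra.
  - replace (u + 0 * A) with u by ring.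
    pose proof (Rmax_r (th * f ms - k) (th * f u - c * u)). lra.
Qed.

(* A player keeping her own contribution is unlinked, so that contribution is
   below [ms]; she also prefers it to the hub, which caps its cost by [k]. *)
Lemma response_contrib_cost_le : c * response_contrib f c k ms th u <= k.
Proof.
  unfold response_contrib. destruct (prefers_hub f c k ms th u) eqn:Hpref; [lra|].
  assert (HL : L = false).
  { apply Bool.not_true_is_false. intros HL.
    rewrite (prefers_hub_of_linked HL) in Hpref. discriminate. }
  unfold prefers_hub in Hpref. destruct (Rle_dec _ _); [discriminate|].
  pose proof (unlinked_contrib_le_net_max HL).
  assert (f u <= f ms) by (apply (f_le f c Hf); lra).
  assert (th * f u <= th * f ms) by (apply Rmult_le_compat_l; lra). lra.
Qed.

Lemma response_value_gain h : (1 - th) * (f ms - f 0) <= c * h / 2 -> A <= ms - h -> k <= c * A ->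
  th * f (u + indic L * A) - c * u - indic L * k + c * h / 2 <= response_value f c k ms th u.
Proof.
  intros Hh HAh HkA. destruct Hms as [Hms0 Hmax].
  assert (Hf0 : forall w, 0 <= w -> f 0 <= f w) by (intros; apply (f_le f c Hf); lra).
  pose proof (Rmax_l (th * f ms - k) (th * f u - c * u)).
  unfold response_value.
  destruct (Bool.bool_dec L true) as [HL|HL%Bool.not_true_is_false]; rewrite HL; unfold indic.
  - replace (u + 1 * A) with (u + A) by ring.
    pose proof (linked_total_le_net_max HL).
    specialize (Hmax (u + A) ltac:(lra)). pose proof (Hf0 (u + A) ltac:(lra)).
    assert ((1 - th) * (f ms - f (u + A)) <= (1 - th) * (f ms - f 0))
      by (apply Rmult_le_compat_l; lra).
    nra.
  - replace (u + 0 * A) with u by ring.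
    pose proof (unlinked_contrib_le_net_max HL).
    specialize (Hmax u Hu). pose proof (Hf0 u Hu).
    assert ((1 - th) * (f ms - f u) <= (1 - th) * (f ms - f 0))
      by (apply Rmult_le_compat_l; lra).
    nra.
Qed.

End PlayerResponse.

Lemma hub_current_le f c k ms u A (L : bool) : is_net_max f c ms -> 0 < c -> 0 < k ->
  0 <= u -> 0 <= A <= ms -> f (u + indic L * A) - c * u - indic L * k <= f ms.
Proof.
  intros [Hms0 Hmax] Hc Hk Hu HA. specialize (Hmax (u + indic L * A)).
  unfold indic in *. destruct L; nra.
Qed.

(* A weight [th0] finds a link to a provider of [A <= ms] worthwhile; a
   higher weight values the good more, and a provider of [ms] even more. *)
Lemma link_worthwhile_mono f c k ms th0 th A : f_assumptions f c -> is_net_max f c ms ->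
  link_worthwhile f c k th0 A -> 0 <= th0 <= th -> th <= 1 ->
  0 <= A <= ms -> k <= c * ms -> link_worthwhile f c k th ms.
Proof.
  intros Hf [Hms0 Hmax] HA0 Hth Hth1 HA Hk w Hw.
  destruct (Rle_dec w ms).
  - specialize (HA0 w Hw).
    assert (f w <= f ms) by (apply (f_le f c Hf); lra).
    assert (f A <= f ms) by (apply (f_le f c Hf); lra).
    assert (0 <= th * (f ms - f w)) by (apply Rmult_le_pos; lra).
    destruct (Rle_dec (k - c * w) 0); [lra|].
    assert (th0 * (f A - f w) <= th * (f A - f w)).
    { destruct (Rle_dec (f A) (f w)); [nra|]. apply Rmult_le_compat_r; lra. }
    assert (th * (f A - f w) <= th * (f ms - f w)) by (apply Rmult_le_compat_l; lra).
    lra.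
  - assert (f ms <= f w) by (apply (f_le f c Hf); lra).
    specialize (Hmax w Hw). nra.
Qed.

Lemma prefers_hub_of_worthwhile f c k ms th u : link_worthwhile f c k th ms -> 0 <= u ->
  prefers_hub f c k ms th u = true.
Proof.
  intros H Hu. unfold prefers_hub. destruct (Rle_dec _ _) as [|Hn]; [reflexivity|].
  exfalso. apply Hn, H, Hu.
Qed.

(** * One good at a time *)

(* Weights [w] ([t] for the first good, [1 - t] for the second), contributions [u], the amount [A] provided by the good's large
   contributor, and [L m] telling whether [m] links to that contributor. *)
Definition side_optimal (f : R -> R) (c k : R) (n : nat) (w u : nat -> R) (A : R)
    (L : nat -> bool) : Prop :=
  (forall m, (m < n)%nat -> forall v, 0 <= v ->
     w m * f (v + indic (L m) * A) - c * v <= w m * f (u m + indic (L m) * A) - c * u m) /\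
  (forall m, (m < n)%nat -> L m = true -> forall v, 0 <= v ->
     w m * f v - c * v <= w m * f (u m + A) - c * u m - k).

Definition side_value (f : R -> R) (c k : R) (w u : nat -> R) (A : R) (L : nat -> bool)
    (m : nat) : R :=
  w m * f (u m + indic (L m) * A) - c * u m - indic (L m) * k.

Definition star_contrib (f : R -> R) (c k ms : R) (w u : nat -> R) (hub m : nat) : R :=
  if Nat.eqb m hub then ms else response_contrib f c k ms (w m) (u m).
Definition star_link (f : R -> R) (c k ms : R) (w u : nat -> R) (hub m : nat) : bool :=
  (negb (Nat.eqb m hub) && prefers_hub f c k ms (w m) (u m))%bool.
Definition star_value (f : R -> R) (c k ms : R) (w u : nat -> R) (hub : nat) : nat -> R :=
  side_value f c k w (star_contrib f c k ms w u hub) ms (star_link f c k ms w u hub).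

Lemma star_contrib_hub f c k ms w u hub : star_contrib f c k ms w u hub hub = ms.
Proof. unfold star_contrib. rewrite Nat.eqb_refl. reflexivity. Qed.

Lemma star_contrib_of_prefers f c k ms w u hub m : m <> hub ->
  prefers_hub f c k ms (w m) (u m) = true -> star_contrib f c k ms w u hub m = 0.
Proof.
  intros Hmh Hp. unfold star_contrib, response_contrib.
  apply Nat.eqb_neq in Hmh. rewrite Hmh, Hp. reflexivity.
Qed.

Lemma star_value_nonhub f c k ms w u hub m : m <> hub ->
  star_value f c k ms w u hub m = response_value f c k ms (w m) (u m).
Proof.
  intros Hmh. unfold star_value, side_value, star_contrib, star_link, response_contrib.
  apply Nat.eqb_neq in Hmh. rewrite Hmh. simpl.
  destruct (prefers_hub f c k ms (w m) (u m)) eqn:Hp; unfold indic.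
  - rewrite response_value_of_prefers by exact Hp. ring_simplify (0 + 1 * ms). ring.
  - rewrite response_value_of_not_prefers by exact Hp. ring_simplify (u m + 0 * ms). ring.
Qed.

Lemma star_value_hub f c k ms w u hub : w hub = 1 ->
  star_value f c k ms w u hub hub = f ms - c * ms.
Proof.
  intros Hw. unfold star_value, side_value, star_link.
  rewrite star_contrib_hub, Nat.eqb_refl, Hw. unfold indic. simpl. ring_simplify (ms + 0 * ms). ring.
Qed.

Section StarSide.

Variables (f : R -> R) (c k ms : R) (n hub : nat) (w u : nat -> R) (A : R) (L : nat -> bool).
Hypotheses (Hf : f_assumptions f c) (Hc : 0 < c) (Hk : 0 < k) (Hms : is_net_max f c ms)
  (Hw : forall m, (m < n)%nat -> 0 <= w m <= 1) (Hwhub : w hub = 1)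
  (Hw1 : forall m, (m < n)%nat -> m <> hub -> w m < 1)
  (Hu : forall m, (m < n)%nat -> 0 <= u m) (HA : 0 <= A <= ms)
  (Hside : side_optimal f c k n w u A L).

Let weight_nonhub m : (m < n)%nat -> m <> hub -> 0 <= w m < 1.
Proof. intros Hm Hmh. split; [apply Hw, Hm | apply Hw1; assumption]. Qed.

Local Ltac player_response :=
  match goal with Hm : (?m < n)%nat |- _ =>
    first [ exact (proj1 Hside m Hm) | exact (proj2 Hside m Hm)
          | exact (weight_nonhub m Hm ltac:(assumption)) | exact (Hu m Hm) | assumption ] end.

Lemma star_contrib_nonneg m : (m < n)%nat -> 0 <= star_contrib f c k ms w u hub m.
Proof.
  intros Hm. unfold star_contrib. destruct (Nat.eqb m hub); [left; apply Hms|].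
  apply response_contrib_nonneg, Hu, Hm.
Qed.

Lemma star_contrib_cost_le m : (m < n)%nat -> m <> hub -> c * star_contrib f c k ms w u hub m <= k.
Proof.
  intros Hm Hmh. unfold star_contrib. rewrite (proj2 (Nat.eqb_neq m hub) Hmh).
  apply (response_contrib_cost_le f c k ms (w m) (u m) A (L m)); player_response.
Qed.

Lemma star_value_best_response m v (P : bool) : (m < n)%nat -> 0 <= v -> (m = hub -> P = false) ->
  w m * f (v + indic P * ms) - c * v - indic P * k <= star_value f c k ms w u hub m.
Proof.
  intros Hm Hv HP. destruct (Nat.eq_dec m hub) as [->|Hmh].
  - rewrite (HP eq_refl), star_value_hub, Hwhub by exact Hwhub. unfold indic.
    destruct Hms as [_ Hmax]. specialize (Hmax (v + 0 * ms) ltac:(lra)). lra.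
  - rewrite star_value_nonhub by exact Hmh. unfold indic. destruct P.
    + ring_simplify (v + 1 * ms).
      pose proof (response_value_ge_hub f c k ms (w m) (u m) v Hf Hms (Hw m Hm) Hv). lra.
    + ring_simplify (v + 0 * ms).
      pose proof (response_value_ge_autarky f c k ms (w m) (u m) A (L m)) as Haut.
      enough (w m * f v - c * v <= response_value f c k ms (w m) (u m)) by lra.
      apply Haut; player_response.
Qed.

Lemma side_value_le_star m : (m < n)%nat -> m <> hub ->
  side_value f c k w u A L m <= star_value f c k ms w u hub m.
Proof.
  intros Hm Hmh. rewrite star_value_nonhub by exact Hmh.
  apply (current_le_response_value f c k ms (w m) (u m) A (L m)); player_response.
Qed.

Lemma side_value_hub_le : (hub < n)%nat ->
  side_value f c k w u A L hub <= star_value f c k ms w u hub hub + c * ms.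
Proof.
  intros Hhub. rewrite star_value_hub by exact Hwhub. unfold side_value. rewrite Hwhub.
  pose proof (hub_current_le f c k ms (u hub) A (L hub) Hms Hc Hk (Hu hub Hhub) HA). lra.
Qed.

Lemma side_value_gain m h : (m < n)%nat -> m <> hub ->
  (1 - w m) * (f ms - f 0) <= c * h / 2 -> A <= ms - h -> k <= c * A ->
  side_value f c k w u A L m + c * h / 2 <= star_value f c k ms w u hub m.
Proof.
  intros Hm Hmh Hh HAh HkA. rewrite star_value_nonhub by exact Hmh.
  apply (response_value_gain f c k ms (w m) (u m) A (L m)); player_response.
Qed.

End StarSide.

Section SideConsequences.

Variables (f : R -> R) (c k : R) (n : nat) (w u : nat -> R) (A : R) (L : nat -> bool).
Hypothesis Hside : side_optimal f c k n w u A L.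

Lemma side_unlinked_optimal a : (a < n)%nat -> L a = false -> u a = A ->
  forall v, 0 <= v -> w a * f v - c * v <= w a * f A - c * A.
Proof.
  intros Ha HL Hu v Hv. pose proof (proj1 Hside a Ha v Hv) as H.
  rewrite HL, Hu in H. unfold indic in H. rewrite !Rmult_0_l, !Rplus_0_r in H. exact H.
Qed.

Lemma side_linked_worthwhile b : (b < n)%nat -> L b = true -> u b = 0 ->
  link_worthwhile f c k (w b) A.
Proof.
  intros Hb HL Hu v Hv. pose proof (proj2 Hside b Hb HL v Hv) as H.
  rewrite Hu, Rplus_0_l, Rmult_0_r, Rminus_0_r in H. exact H.
Qed.

Lemma side_linked_marginal b : (b < n)%nat -> L b = true -> u b = 0 ->
  forall e, 0 <= e -> w b * (f (A + e) - f A) <= c * e.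
Proof.
  intros Hb HL Hu e He. pose proof (proj1 Hside b Hb e He) as H.
  rewrite HL, Hu in H. unfold indic in H.
  replace (e + 1 * A) with (A + e) in H by ring. replace (0 + 1 * A) with A in H by ring. lra.
Qed.

Lemma side_zero_weight_contrib m : 0 < c -> (m < n)%nat -> w m = 0 -> 0 <= u m -> u m = 0.
Proof.
  intros Hc Hm Hw Hu. pose proof (proj1 Hside m Hm 0 (Rle_refl 0)) as H.
  rewrite Hw, !Rmult_0_l in H. nra.
Qed.

End SideConsequences.

(** * Collaborative equilibria *)

Section SingleLink.

Variables (n : nat) (f : R -> R) (c k : R) (t x y : nat -> R) (g : nat -> nat -> bool) (a b : nat).
Hypotheses (Hnash : nash n f c k t x y g) (Hk : 0 < k)
  (Ha : (a < n)%nat) (Hb : (b < n)%nat) (Hab : a <> b) (Hlink : link n g a b = true)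
  (Hrow : forall q, link n g a q = true -> q = a \/ q = b).

Let row_sum_single (u : nat -> R) : row_sum n (g a) a u = u b.
Proof.
  assert (Hl : row_link n (g a) a b = true) by exact Hlink.
  rewrite (row_sum_pair n (g a) a a b Ha Hb Hab Hrow), row_link_self, Hl. ring.
Qed.

Let row_count_single : row_count n (g a) a = 1.
Proof.
  assert (Hl : row_link n (g a) a b = true) by exact Hlink.
  rewrite (row_count_pair n (g a) a a b Ha Hb Hab Hrow), row_link_self, Hl.
  unfold indic. ring.
Qed.

Lemma single_link_optimal_x v : 0 <= v ->
  t a * f (v + x b) - c * v <= t a * f (x a + x b) - c * x a.
Proof.
  intros Hv. destruct Hnash as [Hadm Hdev].
  pose proof (Hdev a Ha v (y a) (g a) Hv (proj2 (Hadm a Ha))) as D.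
  rewrite payoff_deviation, payoff_row, !row_sum_single in D. lra.
Qed.

Lemma single_link_optimal_y v : 0 <= v ->
  (1 - t a) * f (v + y b) - c * v <= (1 - t a) * f (y a + y b) - c * y a.
Proof.
  intros Hv. destruct Hnash as [Hadm Hdev].
  pose proof (Hdev a Ha (x a) v (g a) (proj1 (Hadm a Ha)) Hv) as D.
  rewrite payoff_deviation, payoff_row, !row_sum_single in D. lra.
Qed.

Lemma single_link_target_contributes : x b <> 0 \/ y b <> 0.
Proof.
  destruct (Req_dec (x b) 0) as [Hx|]; [|left; assumption].
  destruct (Req_dec (y b) 0) as [Hy|]; [|right; assumption].
  exfalso. destruct Hnash as [Hadm Hdev].
  pose proof (Hdev a Ha (x a) (y a) (fun _ => false) (proj1 (Hadm a Ha)) (proj2 (Hadm a Ha))) as D.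
  assert (Hnone : forall q, row_link n (fun _ => false) a q = false)
    by (intros q; unfold row_link; rewrite Bool.andb_false_r; reflexivity).
  assert (Hs : forall u : nat -> R, row_sum n (fun _ => false) a u = 0)
    by (intros u; apply sumto_zero; intros q _; rewrite Hnone; reflexivity).
  assert (Hc : row_count n (fun _ => false) a = 0)
    by (apply sumto_zero; intros q _; rewrite Hnone; reflexivity).
  rewrite payoff_deviation, payoff_row, !row_sum_single, row_count_single, !Hs, Hc, Hx, Hy in D.
  lra.
Qed.

End SingleLink.

Section Collaborative.

Variables (n : nat) (f : R -> R) (c k : R) (t x y : nat -> R) (g : nat -> nat -> bool) (i j : nat).
Hypotheses (Hnash : nash n f c k t x y g)
  (Hi : (i < n)%nat) (Hj : (j < n)%nat) (Hij : i <> j)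
  (Hrow : forall m q, (m < n)%nat -> link n g m q = true -> q = i \/ q = j)
  (Hxj : x j = 0) (Hyi : y i = 0).

Let links_to (a m : nat) : bool := row_link n (g m) m a.

Let row_pair m : (m < n)%nat -> forall q, row_link n (g m) m q = true -> q = i \/ q = j.
Proof. intros Hm q. apply Hrow, Hm. Qed.

Lemma collab_row_sum_x m : (m < n)%nat -> row_sum n (g m) m x = indic (links_to i m) * x i.
Proof.
  intros Hm. rewrite (row_sum_pair n (g m) m i j Hi Hj Hij (row_pair m Hm)), Hxj.
  unfold links_to, indic. destruct (row_link n (g m) m i), (row_link n (g m) m j); ring.
Qed.

Lemma collab_row_sum_y m : (m < n)%nat -> row_sum n (g m) m y = indic (links_to j m) * y j.
Proof.
  intros Hm. rewrite (row_sum_pair n (g m) m i j Hi Hj Hij (row_pair m Hm)), Hyi.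
  unfold links_to, indic. destruct (row_link n (g m) m i), (row_link n (g m) m j); ring.
Qed.

Lemma collab_payoff m : (m < n)%nat ->
  payoff n f c k t x y g m =
  side_value f c k t x (x i) (links_to i) m
  + side_value f c k (fun q => 1 - t q) y (y j) (links_to j) m.
Proof.
  intros Hm. rewrite payoff_row, collab_row_sum_x, collab_row_sum_y by exact Hm.
  rewrite (row_count_pair n (g m) m i j Hi Hj Hij (row_pair m Hm)).
  unfold side_value, links_to. ring.
Qed.

Lemma collab_welfare :
  welfare n f c k t x y g =
  sumto n (fun m => side_value f c k t x (x i) (links_to i) m
                    + side_value f c k (fun q => 1 - t q) y (y j) (links_to j) m).
Proof. apply sumto_ext. exact collab_payoff. Qed.

(* Dropping the link to [i] removes [x i] but nothing of the other good,
   since [i] does not contribute to it. *)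
Lemma collab_side_optimal_x : side_optimal f c k n t x (x i) (links_to i).
Proof.
  destruct Hnash as [Hadm Hdev]. split.
  - intros m Hm v Hv.
    pose proof (Hdev m Hm v (y m) (g m) Hv (proj2 (Hadm m Hm))) as D.
    rewrite payoff_deviation, payoff_row, collab_row_sum_x in D by exact Hm. lra.
  - intros m Hm Hlk v Hv.
    set (r q := (g m q && negb (Nat.eqb q i))%bool).
    assert (Hr : forall q, row_link n r m q = (row_link n (g m) m q && negb (Nat.eqb q i))%bool)
      by (intros q; apply row_link_andb).
    assert (Hrpair : forall q, row_link n r m q = true -> q = i \/ q = j).
    { intros q E. rewrite Hr in E. apply andb_prop in E as [E _]. apply (row_pair m Hm q E). }
    assert (Hji : Nat.eqb j i = false) by (apply Nat.eqb_neq; auto).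
    pose proof (Hdev m Hm v (y m) r Hv (proj2 (Hadm m Hm))) as D.
    rewrite payoff_deviation, payoff_row in D.
    rewrite (row_sum_pair n r m i j Hi Hj Hij Hrpair x), (row_sum_pair n r m i j Hi Hj Hij Hrpair y),
      (row_count_pair n r m i j Hi Hj Hij Hrpair), !Hr, Nat.eqb_refl, Hji in D.
    rewrite (row_sum_pair n (g m) m i j Hi Hj Hij (row_pair m Hm) x),
      (row_sum_pair n (g m) m i j Hi Hj Hij (row_pair m Hm) y),
      (row_count_pair n (g m) m i j Hi Hj Hij (row_pair m Hm)) in D.
    unfold links_to in Hlk. rewrite Hlk, Hxj, Hyi in D. simpl in D.
    unfold indic in D. destruct (row_link n (g m) m j); simpl in D;
      rewrite ?Rplus_0_l, ?Rplus_0_r in D; lra.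
Qed.

End Collaborative.

Lemma collab_side_optimal_y n f c k t x y g i j : nash n f c k t x y g ->
  (i < n)%nat -> (j < n)%nat -> i <> j ->
  (forall m q, (m < n)%nat -> link n g m q = true -> q = i \/ q = j) ->
  x j = 0 -> y i = 0 ->
  side_optimal f c k n (fun m => 1 - t m) y (y j) (fun m => row_link n (g m) m j).
Proof.
  intros Hnash Hi Hj Hij Hrow Hxj Hyi.
  apply (collab_side_optimal_x n f c k (fun m => 1 - t m) y x g j i
           (nash_swap_goods _ _ _ _ _ _ _ _ Hnash) Hj Hi (not_eq_sym Hij)); [|assumption ..].
  intros m q Hm E. destruct (Hrow m q Hm E); auto.
Qed.

Section TypeProfile.

Variables (n : nat) (t : nat -> R).
Hypothesis Ht : type_profile n t.

Lemma type_le m m' : (m < n)%nat -> (m' < n)%nat -> (m <= m')%nat -> t m <= t m'.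
Proof.
  intros Hm Hm' Hle. destruct (Nat.eq_dec m m') as [->|]; [lra|].
  left. apply (proj1 Ht); lia.
Qed.

Lemma type_bounds m : (m < n)%nat -> 0 <= t m <= 1.
Proof.
  intros Hm. destruct Ht as (_ & Ht0 & Ht1). rewrite <- Ht0, <- Ht1.
  split; apply type_le; lia.
Qed.

Lemma type_lt_1 m : (m < n)%nat -> m <> (n - 1)%nat -> t m < 1.
Proof. intros Hm Hm1. destruct Ht as (Hlt & _ & <-). apply Hlt; lia. Qed.

Lemma type_gt_0 m : (m < n)%nat -> m <> 0%nat -> 0 < t m.
Proof. intros Hm Hm0. destruct Ht as (Hlt & <- & _). apply Hlt; lia. Qed.

Lemma type_inj m m' : (m < n)%nat -> (m' < n)%nat -> t m = t m' -> m = m'.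
Proof.
  intros Hm Hm' E. destruct (Nat.lt_trichotomy m m') as [L|[L|L]]; [|exact L|].
  - pose proof (proj1 Ht m' m L Hm'). lra.
  - pose proof (proj1 Ht m m' L Hm). lra.
Qed.

End TypeProfile.

Lemma link_worthwhile_cost_le f c k th A : link_worthwhile f c k th A -> 0 <= A -> k <= c * A.
Proof. intros H HA. specialize (H A HA). lra. Qed.

(* The two large contributors of a collaborative equilibrium: [i] provides
   the first good, [j] the second, and each links to the other. *)
Section Specialists.

Variables (f : R -> R) (c k ms : R) (n : nat) (t x y : nat -> R) (Li Lj : nat -> bool) (i j : nat).
Hypotheses (Hf : f_assumptions f c) (Hc : 0 < c) (Hk : 0 < k) (Hms : is_net_max f c ms)
  (Ht : type_profile n t) (Hadm : admissible n x y)
  (Hi : (i < n)%nat) (Hj : (j < n)%nat) (Hij : i <> j)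
  (Hsx : side_optimal f c k n t x (x i) Li)
  (Hsy : side_optimal f c k n (fun m => 1 - t m) y (y j) Lj)
  (HLii : Li i = false) (HLji : Li j = true) (HLjj : Lj j = false) (HLij : Lj i = true)
  (Hxj : x j = 0) (Hyi : y i = 0) (Hxi : 0 < x i) (Hyj : 0 < y j).

Let Hopt_i := side_unlinked_optimal f c k n t x (x i) Li Hsx i Hi HLii eq_refl.
Let Hopt_j := side_unlinked_optimal f c k n (fun m => 1 - t m) y (y j) Lj Hsy j Hj HLjj eq_refl.
Let Hworth_j := side_linked_worthwhile f c k n t x (x i) Li Hsx j Hj HLji Hxj.
Let Hworth_i := side_linked_worthwhile f c k n (fun m => 1 - t m) y (y j) Lj Hsy i Hi HLij Hyi.

Lemma specialist_cost_le_x : k <= c * x i.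
Proof. apply (link_worthwhile_cost_le f c k (t j)); [exact Hworth_j | lra]. Qed.

Lemma specialist_type_bounds : 0 < t i < 1 /\ 0 < t j < 1.
Proof.
  pose proof (type_bounds n t Ht i Hi). pose proof (type_bounds n t Ht j Hj).
  pose proof (Hworth_j 0 (Rle_refl 0)). pose proof (Hworth_i 0 (Rle_refl 0)).
  pose proof (Hopt_i 0 (Rle_refl 0)). pose proof (Hopt_j 0 (Rle_refl 0)).
  cbv beta in *. assert (0 < c * x i) by (apply Rmult_lt_0_compat; lra).
  assert (0 < c * y j) by (apply Rmult_lt_0_compat; lra).
  repeat split; apply Rnot_le_lt; intros Hle.
  - replace (t i) with 0 in * by lra. lra.
  - replace (t i) with 1 in * by lra. lra.
  - replace (t j) with 0 in * by lra. lra.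
  - replace (t j) with 1 in * by lra. lra.
Qed.

Lemma specialist_x_le_net_max : x i <= ms.
Proof.
  destruct specialist_type_bounds as [[] _].
  apply (optimum_le_net_max f c Hf ms Hms (t i) (x i) 0); [lra | lra | left; apply Hms |].
  intros v Hv. apply Hopt_i, Hv.
Qed.

Lemma specialist_y_le_net_max : y j <= ms.
Proof.
  destruct specialist_type_bounds as [_ []].
  apply (optimum_le_net_max f c Hf ms Hms (1 - t j) (y j) 0); [lra | lra | left; apply Hms |].
  intros v Hv. apply Hopt_j, Hv.
Qed.

Lemma specialist_x_affords_link : k <= (1 - t i) * (f ms - f 0).
Proof.
  destruct specialist_type_bounds as [[] _].
  pose proof (Hworth_i 0 (Rle_refl 0)).
  assert (f (y j) <= f ms) by (apply (f_le f c Hf); [lra | apply specialist_y_le_net_max]).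
  assert ((1 - t i) * f (y j) <= (1 - t i) * f ms) by (apply Rmult_le_compat_l; lra).
  lra.
Qed.

Lemma specialist_x_short_of_net_max h :
  (forall th X, 0 < th -> k <= (1 - th) * (f ms - f 0) -> 0 < X ->
     (forall w, 0 <= w < X -> c * (X - w) <= th * (f X - f w)) -> X <= ms - h) ->
  x i <= ms - h.
Proof.
  intros Hgap. destruct specialist_type_bounds as [[Hti0 _] _].
  apply (Hgap (t i) (x i) Hti0 specialist_x_affords_link Hxi).
  intros w Hw. pose proof (Hopt_i w (proj1 Hw)). lra.
Qed.

(* Both [t i] and [t j] bound the marginal benefit of the first good at
   [x i]: from below for [i], who chose [x i], from above for [j], who chose
   to add nothing to it. *)
Lemma specialist_types_ordered : t j < t i.
Proof.
  assert (t j <= t i).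
  { apply (weight_le_of_marginal_bounds f c Hf Hc (x i) (t i) (t j) (x i) Hxi
             (proj1 (type_bounds n t Ht i Hi)) Hxi).
    - intros e He. pose proof (Hopt_i (x i - e) ltac:(lra)). lra.
    - intros e He. apply (side_linked_marginal f c k n t x (x i) Li Hsx j Hj HLji Hxj). lra. }
  destruct (Req_dec (t j) (t i)) as [E|]; [|lra].
  exfalso. apply Hij, (type_inj n t Ht i j Hi Hj). auto.
Qed.

Lemma collab_coverage m : (m < n)%nat ->
  prefers_hub f c k ms (t m) (x m) = true \/ prefers_hub f c k ms (1 - t m) (y m) = true.
Proof.
  intros Hm. pose proof (type_bounds n t Ht m Hm) as Htm.
  pose proof (type_bounds n t Ht i Hi). pose proof (type_bounds n t Ht j Hj).
  pose proof specialist_x_le_net_max. pose proof specialist_y_le_net_max.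
  assert (Hkms : k <= c * ms) by (pose proof specialist_cost_le_x; nra).
  destruct (Rle_dec (t j) (t m)).
  - left. apply prefers_hub_of_worthwhile; [|apply Hadm, Hm].
    apply (link_worthwhile_mono f c k ms (t j) (t m) (x i) Hf Hms Hworth_j); lra.
  - right. apply prefers_hub_of_worthwhile; [|apply Hadm, Hm].
    pose proof specialist_types_ordered.
    apply (link_worthwhile_mono f c k ms (1 - t i) (1 - t m) (y j) Hf Hms Hworth_i); lra.
Qed.

End Specialists.

(** * The star profile *)

(* Player [n - 1] (type 1) is the hub of the first good, player [0] (type 0)
   the hub of the second; [lx] and [ly] select who links to each hub. *)
Definition star_network (n : nat) (lx ly : nat -> bool) : nat -> nat -> bool :=
  fun a b => (Nat.eqb b (n - 1) && lx a || Nat.eqb b 0 && ly a)%bool.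

Definition high_type (b : R) (t : nat -> R) (m : nat) : R :=
  if Rle_dec b (t m) then (if Rlt_dec (t m) 1 then 1 else 0) else 0.

Lemma high_type_nonneg b t m : 0 <= high_type b t m.
Proof. unfold high_type. destruct (Rle_dec _ _); [destruct (Rlt_dec _ _)|]; lra. Qed.

Section StarProfile.

Variables (f : R -> R) (c k ms : R) (n : nat) (t x y : nat -> R) (A B : R) (Lx Ly : nat -> bool).
Hypotheses (Hf : f_assumptions f c) (Hc : 0 < c) (Hk : 0 < k) (Hms : is_net_max f c ms)
  (Ht : type_profile n t) (Hn : (2 <= n)%nat) (Hadm : admissible n x y)
  (HA : 0 <= A <= ms) (HB : 0 <= B <= ms)
  (Hsx : side_optimal f c k n t x A Lx)
  (Hsy : side_optimal f c k n (fun m => 1 - t m) y B Ly)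
  (Hcov : forall m, (m < n)%nat ->
     prefers_hub f c k ms (t m) (x m) = true \/ prefers_hub f c k ms (1 - t m) (y m) = true).

Let p := (n - 1)%nat.
Let xs := star_contrib f c k ms t x p.
Let ys := star_contrib f c k ms (fun m => 1 - t m) y 0.
Let lx := star_link f c k ms t x p.
Let ly := star_link f c k ms (fun m => 1 - t m) y 0.
Let gs := star_network n lx ly.
Let value_x := star_value f c k ms t x p.
Let value_y := star_value f c k ms (fun m => 1 - t m) y 0.

Let Hp : (p < n)%nat. Proof. unfold p. lia. Qed.
Let H0 : (0 < n)%nat. Proof. lia. Qed.
Let Hp0 : p <> 0%nat. Proof. unfold p. lia. Qed.
Let Hx : forall m, (m < n)%nat -> 0 <= x m. Proof. intros m Hm. apply Hadm, Hm. Qed.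
Let Hy : forall m, (m < n)%nat -> 0 <= y m. Proof. intros m Hm. apply Hadm, Hm. Qed.
Let Hwx : forall m, (m < n)%nat -> 0 <= t m <= 1. Proof. exact (type_bounds n t Ht). Qed.
Let Hwy : forall m, (m < n)%nat -> 0 <= 1 - t m <= 1.
Proof. intros m Hm. pose proof (type_bounds n t Ht m Hm). lra. Qed.
Let Htp : t p = 1. Proof. apply Ht. Qed.
Let Ht0 : 1 - t 0%nat = 1. Proof. destruct Ht as (_ & -> & _). ring. Qed.
Let Hwx1 : forall m, (m < n)%nat -> m <> p -> t m < 1. Proof. exact (type_lt_1 n t Ht). Qed.
Let Hwy1 : forall m, (m < n)%nat -> m <> 0%nat -> 1 - t m < 1.
Proof. intros m Hm Hm0. pose proof (type_gt_0 n t Ht m Hm Hm0). lra. Qed.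

Let xs_hub : xs p = ms. Proof. apply star_contrib_hub. Qed.
Let ys_hub : ys 0%nat = ms. Proof. apply star_contrib_hub. Qed.

Lemma star_network_row m q : row_link n (gs m) m q = true -> q = p \/ q = 0%nat.
Proof.
  intros E. apply row_link_true in E as (_ & _ & E). unfold gs, star_network in E.
  apply Bool.orb_prop in E as [E|E]; apply andb_prop in E as [E _]; apply Nat.eqb_eq in E; auto.
Qed.

Lemma star_network_links_p m : row_link n (gs m) m p = lx m.
Proof.
  unfold row_link, gs, star_network, lx, star_link. change (n - 1)%nat with p.
  rewrite Nat.eqb_refl, (proj2 (Nat.ltb_lt p n) Hp), (proj2 (Nat.eqb_neq p 0) Hp0).
  destruct (Nat.eq_dec m p) as [->|Hmp]; [rewrite Nat.eqb_refl; reflexivity|].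
  rewrite (proj2 (Nat.eqb_neq p m) (not_eq_sym Hmp)), (proj2 (Nat.eqb_neq m p) Hmp).
  simpl. rewrite Bool.orb_false_r. reflexivity.
Qed.

Lemma star_network_links_0 m : row_link n (gs m) m 0 = ly m.
Proof.
  unfold row_link, gs, star_network, ly, star_link. change (n - 1)%nat with p.
  rewrite Nat.eqb_refl, (proj2 (Nat.ltb_lt 0 n) H0), (proj2 (Nat.eqb_neq 0 p) (not_eq_sym Hp0)).
  destruct m as [|m]; [reflexivity|]. reflexivity.
Qed.

Lemma star_xs_0 : xs 0%nat = 0.
Proof.
  unfold xs, star_contrib, response_contrib.
  rewrite (proj2 (Nat.eqb_neq 0 p) (not_eq_sym Hp0)).
  rewrite (side_zero_weight_contrib f c k n t x A Lx Hsx 0 Hc H0 (proj1 (proj2 Ht)) (Hx 0%nat H0)).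
  destruct (prefers_hub _ _ _ _ _ _); reflexivity.
Qed.

Lemma star_ys_p : ys p = 0.
Proof.
  unfold ys, star_contrib, response_contrib.
  rewrite (proj2 (Nat.eqb_neq p 0) Hp0).
  rewrite (side_zero_weight_contrib f c k n (fun m => 1 - t m) y B Ly Hsy p Hc Hp
             ltac:(cbv beta; rewrite Htp; ring) (Hy p Hp)).
  destruct (prefers_hub _ _ _ _ _ _); reflexivity.
Qed.

Lemma star_payoff m : (m < n)%nat -> payoff n f c k t xs ys gs m = value_x m + value_y m.
Proof.
  intros Hm. rewrite payoff_row.
  rewrite (row_sum_pair n (gs m) m p 0 Hp H0 Hp0 (star_network_row m) xs),
    (row_sum_pair n (gs m) m p 0 Hp H0 Hp0 (star_network_row m) ys),
    (row_count_pair n (gs m) m p 0 Hp H0 Hp0 (star_network_row m)),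
    star_network_links_p, star_network_links_0, star_xs_0, star_ys_p.
  unfold value_x, value_y, star_value, side_value. fold xs ys lx ly.
  rewrite xs_hub, ys_hub. unfold indic.
  destruct (lx m), (ly m); rewrite ?Rplus_0_l, ?Rplus_0_r, ?Rmult_1_l, ?Rmult_0_l, ?Rplus_0_r; ring.
Qed.

Let cost_le_x m : (m < n)%nat -> m <> p -> c * xs m <= k.
Proof. intros Hm Hmp. apply (star_contrib_cost_le f c k ms n p t x A Lx); auto. Qed.

Let cost_le_y m : (m < n)%nat -> m <> 0%nat -> c * ys m <= k.
Proof. intros Hm Hm0. apply (star_contrib_cost_le f c k ms n 0 (fun m => 1 - t m) y B Ly); auto. Qed.

(* Beyond the hubs, every player contributes to at most one good and at cost
   at most [k], so no link to her pays. *)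
Lemma star_links_to_others_unprofitable r m :
  c * row_sum n r m (fun q => if Nat.eqb q p then 0 else xs q)
  + c * row_sum n r m (fun q => if Nat.eqb q 0 then 0 else ys q) - row_count n r m * k
  <= - indic (row_link n r m p) * k - indic (row_link n r m 0) * k.
Proof.
  set (F q := if row_link n r m q
              then c * (if Nat.eqb q p then 0 else xs q) + c * (if Nat.eqb q 0 then 0 else ys q) - k
              else 0).
  assert (E : c * row_sum n r m (fun q => if Nat.eqb q p then 0 else xs q)
              + c * row_sum n r m (fun q => if Nat.eqb q 0 then 0 else ys q) - row_count n r m * k
              = sumto n F).
  { unfold row_sum, row_count.
    rewrite (Rmult_comm (sumto n _) k), <- !sumto_scal, <- sumto_plus, <- sumto_minus.
    apply sumto_ext. intros q _. unfold F, indic. destruct (row_link n r m q); ring. }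
  rewrite E. eapply Rle_trans; [apply (sumto_le_pair n F p 0 Hp H0 Hp0)|].
  - intros q Hq Hqp Hq0. unfold F.
    rewrite (proj2 (Nat.eqb_neq q p) Hqp), (proj2 (Nat.eqb_neq q 0) Hq0).
    destruct (row_link n r m q); [|lra].
    destruct (Hcov q Hq) as [Hpx|Hpy].
    + assert (Z : xs q = 0) by exact (star_contrib_of_prefers f c k ms t x p q Hqp Hpx).
      rewrite Z. pose proof (cost_le_y q Hq Hq0). lra.
    + assert (Z : ys q = 0)
        by exact (star_contrib_of_prefers f c k ms (fun m => 1 - t m) y 0 q Hq0 Hpy).
      rewrite Z. pose proof (cost_le_x q Hq Hqp). lra.
  - unfold F. rewrite !Nat.eqb_refl, (proj2 (Nat.eqb_neq p 0) Hp0), (proj2 (Nat.eqb_neq 0 p) (not_eq_sym Hp0)).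
    fold xs ys. rewrite star_xs_0, star_ys_p. unfold indic.
    destruct (row_link n r m p), (row_link n r m 0); lra.
Qed.

Lemma star_nash : nash n f c k t xs ys gs.
Proof.
  split.
  - intros m Hm. split; apply (star_contrib_nonneg f c k ms n); auto.
  - intros m Hm v w r Hv Hw. rewrite payoff_deviation, (star_payoff m Hm).
    rewrite (row_sum_split n r m xs p Hp), (row_sum_split n r m ys 0 H0).
    rewrite xs_hub, ys_hub.
    set (Ax := row_sum n r m (fun q => if Nat.eqb q p then 0 else xs q)).
    set (Ay := row_sum n r m (fun q => if Nat.eqb q 0 then 0 else ys q)).
    assert (HAx : 0 <= Ax) by (apply row_sum_nonneg; intros q Hq; destruct (Nat.eqb q p);
                                 [lra | apply (star_contrib_nonneg f c k ms n); auto]).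
    assert (HAy : 0 <= Ay) by (apply row_sum_nonneg; intros q Hq; destruct (Nat.eqb q 0);
                                 [lra | apply (star_contrib_nonneg f c k ms n); auto]).
    pose proof (star_links_to_others_unprofitable r m) as Hothers. fold Ax Ay in Hothers.
    assert (Bx : t m * f (v + Ax + indic (row_link n r m p) * ms) - c * (v + Ax)
                 - indic (row_link n r m p) * k <= value_x m).
    { apply (star_value_best_response f c k ms n p t x A Lx); auto; [lra|].
      intros ->. apply row_link_self. }
    assert (By : (1 - t m) * f (w + Ay + indic (row_link n r m 0) * ms) - c * (w + Ay)
                 - indic (row_link n r m 0) * k <= value_y m).
    { apply (star_value_best_response f c k ms n 0 (fun m => 1 - t m) y B Ly); auto; [lra|].
      intros ->. apply row_link_self. }
    replace (v + (indic (row_link n r m p) * ms + Ax)) with (v + Ax + indic (row_link n r m p) * ms) by ring.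
    replace (w + (indic (row_link n r m 0) * ms + Ay)) with (w + Ay + indic (row_link n r m 0) * ms) by ring.
    lra.
Qed.

Lemma star_welfare : welfare n f c k t xs ys gs = sumto n (fun m => value_x m + value_y m).
Proof. apply sumto_ext. exact star_payoff. Qed.

Let sum_indicator a : (a < n)%nat -> sumto n (fun m => indic (Nat.eqb m a)) = 1.
Proof.
  intros Ha. rewrite (sumto_single n _ a Ha).
  - rewrite Nat.eqb_refl. reflexivity.
  - intros q _ Hqa. rewrite (proj2 (Nat.eqb_neq q a) Hqa). reflexivity.
Qed.

(* The hubs lose at most [c ms] each, every other player weakly gains, and
   players of type in [[b, 1)] gain [c h / 2] on the first good. *)
Lemma star_welfare_gain h b : 0 < b < 1 -> (1 - b) * (f ms - f 0) <= c * h / 2 ->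
  A <= ms - h -> k <= c * A -> 4 * ms < h * sumto n (high_type b t) ->
  sumto n (fun m => side_value f c k t x A Lx m + side_value f c k (fun m => 1 - t m) y B Ly m)
  < sumto n (fun m => value_x m + value_y m).
Proof.
  intros Hb Hhigh HAh HkA Hcount.
  set (bonus m := c * h / 2 * high_type b t m - c * ms * indic (Nat.eqb m p)
                  - c * ms * indic (Nat.eqb m 0)).
  assert (Hbonus : sumto n bonus = c * h / 2 * sumto n (high_type b t) - c * ms - c * ms).
  { unfold bonus. rewrite !sumto_minus, !sumto_scal, !sum_indicator by assumption. ring. }
  assert (Hle : forall m, (m < n)%nat ->
    side_value f c k t x A Lx m + side_value f c k (fun m => 1 - t m) y B Ly m + bonus m
    <= value_x m + value_y m).
  { intros m Hm. unfold bonus, high_type.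
    assert (Hx_le : m <> p -> side_value f c k t x A Lx m <= value_x m)
      by (intros; apply (side_value_le_star f c k ms n p t x A Lx); auto).
    assert (Hy_le : m <> 0%nat -> side_value f c k (fun m => 1 - t m) y B Ly m <= value_y m)
      by (intros; apply (side_value_le_star f c k ms n 0 (fun m => 1 - t m) y B Ly); auto).
    destruct (Nat.eq_dec m p) as [->|Hmp]; [|destruct (Nat.eq_dec m 0) as [->|Hm0]].
    - rewrite Htp, Nat.eqb_refl, (proj2 (Nat.eqb_neq p 0) Hp0).
      assert (side_value f c k t x A Lx p <= value_x p + c * ms)
        by exact (side_value_hub_le f c k ms n p t x A Lx Hc Hk Hms Htp Hx HA Hp).
      pose proof (Hy_le Hp0). destruct (Rle_dec _ _); [destruct (Rlt_dec _ _)|]; unfold indic; lra.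
    - rewrite (proj1 (proj2 Ht)), Nat.eqb_refl, (proj2 (Nat.eqb_neq 0 p) (not_eq_sym Hp0)).
      assert (side_value f c k (fun m => 1 - t m) y B Ly 0 <= value_y 0%nat + c * ms)
        by exact (side_value_hub_le f c k ms n 0 (fun m => 1 - t m) y B Ly Hc Hk Hms Ht0 Hy HB H0).
      pose proof (Hx_le (not_eq_sym Hp0)).
      destruct (Rle_dec _ _); [lra|]. unfold indic. lra.
    - rewrite (proj2 (Nat.eqb_neq m p) Hmp), (proj2 (Nat.eqb_neq m 0) Hm0). unfold indic.
      pose proof (Hy_le Hm0).
      destruct (Rle_dec b (t m)); [destruct (Rlt_dec (t m) 1)|].
      + assert (Hgain : side_value f c k t x A Lx m + c * h / 2 <= value_x m).
        { apply (side_value_gain f c k ms n p t x A Lx); auto.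
          assert (f 0 <= f ms) by (apply (f_le f c Hf); [lra | left; apply Hms]).
          assert ((1 - t m) * (f ms - f 0) <= (1 - b) * (f ms - f 0))
            by (apply Rmult_le_compat_r; lra).
          lra. }
        lra.
      + pose proof (Hx_le Hmp). lra.
      + pose proof (Hx_le Hmp). lra. }
  pose proof (sumto_le n _ _ Hle) as Hsum.
  rewrite sumto_plus, Hbonus in Hsum.
  assert (0 < c * (h * sumto n (high_type b t) - 4 * ms)) by (apply Rmult_lt_0_compat; lra).
  nra.
Qed.

End StarProfile.

(* Two contributors to the same good would have equal types. *)
Lemma collab_specialists n f c k t x y g i j : f_assumptions f c -> 0 < c -> 0 < k ->
  type_profile n t -> nash n f c k t x y g -> (i < n)%nat -> (j < n)%nat -> i <> j ->
  (forall m q, (m < n)%nat -> link n g m q = true -> q = i \/ q = j) ->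
  link n g i j = true -> link n g j i = true ->
  (0 < x i /\ y i = 0 /\ x j = 0 /\ 0 < y j) \/ (0 < x j /\ y j = 0 /\ x i = 0 /\ 0 < y i).
Proof.
  intros Hf Hc Hk Ht Hnash Hi Hj Hij Hrow Hgij Hgji.
  assert (Hrow_i : forall q, link n g i q = true -> q = i \/ q = j) by (intros; apply Hrow with i; auto).
  assert (Hrow_j : forall q, link n g j q = true -> q = j \/ q = i)
    by (intros q E; destruct (Hrow j q Hj E); auto).
  pose proof (proj1 Hnash i Hi) as [Hxi Hyi]. pose proof (proj1 Hnash j Hj) as [Hxj Hyj].
  pose proof (type_bounds n t Ht i Hi). pose proof (type_bounds n t Ht j Hj).
  assert (Hti : t i <> t j) by (intros E; apply Hij, (type_inj n t Ht); auto).
  pose proof (single_link_optimal_x n f c k t x y g i j Hnash Hi Hj Hij Hgij Hrow_i) as Oxi.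
  pose proof (single_link_optimal_x n f c k t x y g j i Hnash Hj Hi (not_eq_sym Hij) Hgji Hrow_j) as Oxj.
  pose proof (single_link_optimal_y n f c k t x y g i j Hnash Hi Hj Hij Hgij Hrow_i) as Oyi.
  pose proof (single_link_optimal_y n f c k t x y g j i Hnash Hj Hi (not_eq_sym Hij) Hgji Hrow_j) as Oyj.
  assert (Jx : ~ (0 < x i /\ 0 < x j)).
  { intros [Pi Pj]. apply Hti, Rle_antisym.
    - apply (weight_le_of_joint_optimum f c Hf Hc (t j) (t i) (x j) (x i)); assumption || lra.
    - apply (weight_le_of_joint_optimum f c Hf Hc (t i) (t j) (x i) (x j)); assumption || lra. }
  assert (Jy : ~ (0 < y i /\ 0 < y j)).
  { intros [Pi Pj]. apply Hti. enough (1 - t i = 1 - t j) by lra. apply Rle_antisym.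
    - apply (weight_le_of_joint_optimum f c Hf Hc (1 - t j) (1 - t i) (y j) (y i)); assumption || lra.
    - apply (weight_le_of_joint_optimum f c Hf Hc (1 - t i) (1 - t j) (y i) (y j)); assumption || lra. }
  pose proof (single_link_target_contributes n f c k t x y g i j Hnash Hk Hi Hj Hij Hgij Hrow_i).
  pose proof (single_link_target_contributes n f c k t x y g j i Hnash Hk Hj Hi (not_eq_sym Hij) Hgji
                Hrow_j).
  destruct (Rle_lt_or_eq_dec 0 (x i) Hxi) as [Pxi|Exi]; [left | right]; lra.
Qed.

(** * Large societies *)

Section LargeSociety.

Variables (f : R -> R) (c k ms h b : R) (n : nat) (t : nat -> R).
Hypotheses (Hf : f_assumptions f c) (Hc : 0 < c) (Hk : 0 < k) (Hms : is_net_max f c ms)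
  (Ht : type_profile n t) (Hn : (3 <= n)%nat)
  (Hgap : forall th X, 0 < th -> k <= (1 - th) * (f ms - f 0) -> 0 < X ->
     (forall w, 0 <= w < X -> c * (X - w) <= th * (f X - f w)) -> X <= ms - h)
  (Hb : 0 < b < 1) (Hhigh : (1 - b) * (f ms - f 0) <= c * h / 2)
  (Hcount : 4 * ms < h * sumto n (high_type b t)).

Lemma specialized_collab_improvable x y g i j : nash n f c k t x y g ->
  (i < n)%nat -> (j < n)%nat -> i <> j ->
  (forall m q, (m < n)%nat -> link n g m q = true -> q = i \/ q = j) ->
  link n g i j = true -> link n g j i = true ->
  0 < x i -> y i = 0 -> x j = 0 -> 0 < y j ->
  exists x' y' g', nash n f c k t x' y' g' /\
    welfare n f c k t x y g < welfare n f c k t x' y' g'.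
Proof.
  intros Hnash Hi Hj Hij Hrow Hgij Hgji Hxi Hyi Hxj Hyj.
  set (Li m := row_link n (g m) m i). set (Lj m := row_link n (g m) m j).
  assert (Hsx : side_optimal f c k n t x (x i) Li)
    by exact (collab_side_optimal_x n f c k t x y g i j Hnash Hi Hj Hij Hrow Hxj Hyi).
  assert (Hsy : side_optimal f c k n (fun m => 1 - t m) y (y j) Lj)
    by exact (collab_side_optimal_y n f c k t x y g i j Hnash Hi Hj Hij Hrow Hxj Hyi).
  assert (HLii : Li i = false) by apply row_link_self.
  assert (HLjj : Lj j = false) by apply row_link_self.
  pose proof (proj1 Hnash) as Hadm.
  pose proof (specialist_x_le_net_max f c k ms n t x y Li Lj i j Hf Hc Hk Hms Ht Hi Hj Hsx Hsy
                HLii Hgji HLjj Hgij Hxj Hyi Hxi Hyj).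
  pose proof (specialist_y_le_net_max f c k ms n t x y Li Lj i j Hf Hc Hk Hms Ht Hi Hj Hsx Hsy
                HLii Hgji HLjj Hgij Hxj Hyi Hxi Hyj).
  pose proof (specialist_x_short_of_net_max f c k ms n t x y Li Lj i j Hf Hc Hk Hms Ht Hi Hj Hsx Hsy
                HLii Hgji HLjj Hgij Hxj Hyi Hxi Hyj h Hgap).
  pose proof (specialist_cost_le_x f c k n t x Li i j Hj Hsx Hgji Hxj Hxi).
  pose proof (collab_coverage f c k ms n t x y Li Lj i j Hf Hc Hk Hms Ht Hadm Hi Hj Hij Hsx Hsy
                HLii Hgji HLjj Hgij Hxj Hyi Hxi Hyj).
  exists (star_contrib f c k ms t x (n - 1)),
    (star_contrib f c k ms (fun m => 1 - t m) y 0),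
    (star_network n (star_link f c k ms t x (n - 1)) (star_link f c k ms (fun m => 1 - t m) y 0)).
  split.
  - apply (star_nash f c k ms n t x y (x i) (y j) Li Lj); auto; lia || lra.
  - rewrite (star_welfare f c k ms n t x y (x i) (y j) Li Lj) by (auto; lia || lra).
    rewrite (collab_welfare n f c k t x y g i j Hi Hj Hij Hrow Hxj Hyi).
    apply (star_welfare_gain f c k ms n t x y (x i) (y j) Li Lj) with (h := h) (b := b);
      auto; lia || lra.
Qed.

Lemma no_collaborative_welfare_max x y g :
  welfare_max_eq n f c k t x y g -> ~ collaborative n g.
Proof.
  intros [Hnash Hmax] (i & j & Hi & Hj & Hij & Hgij & Hgji & HC).
  assert (Hrow : forall m q, (m < n)%nat -> link n g m q = true -> q = i \/ q = j).
  { intros m q Hm E. apply (HC q); [apply (row_link_true n (g m) m q E) |].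
    split; [apply (row_link_true n (g m) m q E) | eauto]. }
  assert (Hrow' : forall m q, (m < n)%nat -> link n g m q = true -> q = j \/ q = i)
    by (intros m q Hm E; destruct (Hrow m q Hm E); auto).
  destruct (collab_specialists n f c k t x y g i j Hf Hc Hk Ht Hnash Hi Hj Hij Hrow Hgij Hgji)
    as [(Pxi & Eyi & Exj & Pyj) | (Pxj & Eyj & Exi & Pyi)].
  - destruct (specialized_collab_improvable x y g i j Hnash Hi Hj Hij Hrow Hgij Hgji Pxi Eyi Exj Pyj)
      as (x' & y' & g' & Hnash' & Hgain).
    pose proof (Hmax x' y' g' Hnash'). lra.
  - destruct (specialized_collab_improvable x y g j i Hnash Hj Hi (not_eq_sym Hij) Hrow' Hgji Hgij
                Pxj Eyj Exi Pyi) as (x' & y' & g' & Hnash' & Hgain).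
    pose proof (Hmax x' y' g' Hnash'). lra.
Qed.

End LargeSociety.

Lemma INR_unbounded r : exists N : nat, r < INR N.
Proof.
  destruct (archimed r) as [H1 _]. destruct (Z_lt_le_dec (up r) 0) as [Hl|Hl].
  - exists 0%nat. simpl. apply IZR_lt in Hl. lra.
  - exists (Z.to_nat (up r)). rewrite INR_IZR_INZ, Z2Nat.id; assumption.
Qed.

(* One type in each of the [K] disjoint windows
   [(b + 2 r d, b + 2 (r + 1) d)], [r < K], all inside [[b, 1)]. *)
Lemma high_types_lower_bound n t b d : (forall i j, (j < i)%nat -> (i < n)%nat -> t j < t i) ->
  0 < d -> 0 <= b -> forall K M, (M <= n)%nat -> b + 2 * INR K * d < 1 ->
  (forall r, (r < K)%nat -> exists q, (q < M)%nat /\ b + 2 * INR r * d < t q < b + 2 * (INR r + 1) * d) ->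
  INR K <= sumto M (high_type b t).
Proof.
  intros Hmono Hd Hb K. induction K as [|K IH]; intros M HM HK H.
  - simpl. apply sumto_nonneg. intros; apply high_type_nonneg.
  - rewrite S_INR in *. destruct (H K (Nat.lt_succ_diag_r K)) as [q [Hq Htq]].
    pose proof (pos_INR K).
    assert (IHq : INR K <= sumto q (high_type b t)).
    { apply IH; [lia | lra |]. intros r Hr. destruct (H r ltac:(lia)) as [q' [Hq' Ht']].
      exists q'. split; [|exact Ht'].
      assert (INR r + 1 <= INR K) by (rewrite <- S_INR; apply le_INR; lia).
      destruct (Nat.lt_ge_cases q' q) as [|Hge]; [assumption|]. exfalso.
      destruct (Nat.eq_dec q q') as [<-|]; [nra|].
      pose proof (Hmono q' q ltac:(lia) ltac:(lia)). nra. }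
    assert (Hhq : high_type b t q = 1).
    { unfold high_type. destruct (Rle_dec b (t q)) as [|Hn]; [|exfalso; apply Hn; nra].
      destruct (Rlt_dec (t q) 1) as [|Hn]; [reflexivity | exfalso; apply Hn; nra]. }
    assert (sumto (S q) (high_type b t) <= sumto M (high_type b t))
      by (apply sumto_le_prefix; [intros; apply high_type_nonneg | lia]).
    simpl in *. lra.
Qed.

(* Types of weight above [a] cannot afford the link to the second good, and
   those below have their optimum [h] short of [ms]; [b] is close enough to 1
   for types in [[b, 1)] to gain [c h / 2] from the hub. *)
Lemma exists_society_constants f c k ms : f_assumptions f c -> 0 < c -> 0 < k ->
  is_net_max f c ms -> exists h b, 0 < h /\ 0 < b < 1 /\
    (1 - b) * (f ms - f 0) <= c * h / 2 /\
    (forall th X, 0 < th -> k <= (1 - th) * (f ms - f 0) -> 0 < X ->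
       (forall w, 0 <= w < X -> c * (X - w) <= th * (f X - f w)) -> X <= ms - h).
Proof.
  intros Hf Hc Hk Hms. set (D := f ms - f 0).
  assert (HD : 0 < D) by (pose proof (f_lt f c Hf 0 ms ltac:(lra) (proj1 Hms)); unfold D; lra).
  assert (Hkd : 0 < k / D) by (apply Rdiv_lt_0_compat; lra).
  set (a := Rmax (1 / 2) (1 - k / D)).
  assert (Ha : 0 < a < 1).
  { unfold a. split; [pose proof (Rmax_l (1 / 2) (1 - k / D)) | apply Rmax_lub_lt]; lra. }
  destruct (optimum_gap f c Hf Hc ms Hms a Ha) as [h [Hh Hgap]].
  set (e := Rmin (1 / 2) (c * h / (2 * (D + 1)))).
  assert (0 < c * h / (2 * (D + 1))) by (apply Rdiv_lt_0_compat; nra).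
  assert (e <= c * h / (2 * (D + 1))) by apply Rmin_r.
  assert (c * h / (2 * (D + 1)) * D <= c * h / 2)
    by (apply (Rmult_le_reg_r (2 * (D + 1))); [lra|]; field_simplify; nra).
  assert (0 < e <= 1 / 2) by (split; [apply Rmin_glb_lt; lra | apply Rmin_l]).
  exists h, (1 - e). split; [exact Hh|]. split; [lra|]. split; [fold D; nra|].
  intros th X Hth HkD HX Hopt. apply (Hgap th X); [split; [exact Hth|] | exact HX | exact Hopt].
  fold D in HkD.
  assert (k / D <= 1 - th).
  { unfold Rdiv. apply (Rmult_le_reg_r D); [lra|].
    rewrite Rmult_assoc, Rinv_l, Rmult_1_r by lra. exact HkD. }
  assert (1 - k / D <= a) by apply Rmax_r. lra.
Qed.

Lemma dense_high_types_count n t b N : type_profile n t -> 0 < b < 1 ->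
  delta_dense n t ((1 - b) / (2 * (INR N + 1))) -> INR N <= sumto n (high_type b t).
Proof.
  intros Ht Hb Hdense. pose proof (pos_INR N).
  set (d := (1 - b) / (2 * (INR N + 1))) in *.
  assert (Hd : 0 < d) by (apply Rdiv_lt_0_compat; lra).
  assert (Hdd : 2 * (INR N + 1) * d = 1 - b) by (unfold d; field; lra).
  apply (high_types_lower_bound n t b d (proj1 Ht) Hd ltac:(lra) N n (Nat.le_refl n)); [nra|].
  intros r Hr. assert (INR r + 1 <= INR N) by (rewrite <- S_INR; apply le_INR; lia).
  pose proof (pos_INR r).
  destruct (Hdense (b + (2 * INR r + 1) * d) ltac:(split; nra)) as [q [Hq Hz]].
  exists q. split; [exact Hq|]. apply Rabs_lt_between in Hz. nra.
Qed.

Theorem mainTheorem14 :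
  forall (f : R -> R) (c k : R),
    0 < c -> 0 < k -> f_assumptions f c ->
    exists delta : R, 0 < delta /\
      forall (n : nat) (t : nat -> R),
        (3 <= n)%nat -> type_profile n t -> delta_dense n t delta ->
        forall (x y : nat -> R) (g : nat -> nat -> bool),
          welfare_max_eq n f c k t x y g -> ~ collaborative n g.
Proof.
  intros f c k Hc Hk Hf.
  destruct (exists_net_max f c Hf) as [ms Hms].
  destruct (exists_society_constants f c k ms Hf Hc Hk Hms) as (h & b & Hh & Hb & Hhigh & Hgap).
  destruct (INR_unbounded (4 * ms / h)) as [N HN].
  exists ((1 - b) / (2 * (INR N + 1))).
  split; [apply Rdiv_lt_0_compat; pose proof (pos_INR N); lra|].
  intros n t Hn Ht Hdense x y g.
  apply (no_collaborative_welfare_max f c k ms h b n t Hf Hc Hk Hms Ht Hn Hgap Hb Hhigh).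
  pose proof (dense_high_types_count n t b N Ht Hb Hdense).
  assert (4 * ms / h * h = 4 * ms) by (field; lra). nra.
Qed.
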